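(* In the FHMA network described below with a fixed integer number of sub-bands $N\ge 2$, consider the normalized mean local delay $\frac{D(N)}{\log_2(1+\theta)}$ as a function of the SINR threshold $\theta>0$, and let $\theta_{\mathrm{opt}}$ denote its minimizer. (i) In the noise-limited regime (interference neglected, i.e. $D(N)=N\exp\left(\frac{\theta r_0^\alpha WN_0}{N}\right)$), $$\theta_{\mathrm{opt}}=\exp\left(\mathcal{W}\left(\frac{N}{r_0^{\alpha}WN_0}\right)\right)-1,$$ where $\mathcal{W}$ is the Lambert $\mathcal{W}$ function, i.e. $\mathcal{W}(z)e^{\mathcal{W}(z)}=z$. (ii) In the interference-limited regime (noise neglected, $N_0=0$), $$\theta_{\mathrm{opt}}\in\left(b_0^{-1/(\delta+1)}-1,\ b_0^{-1/\delta}\right),\qquad b_0=\lambda c_d r_0^d\delta C(\delta)(N-1)^{\delta-1}N^{-\delta}.$$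
   Context: Model: transmitters form a homogeneous Poisson point process $\Phi$ of intensity $\lambda>0$ in $\mathbb{R}^d$; the typical receiver is at the origin and its desired transmitter $x_0\in\Phi$ is at distance $r_0>0$; probabilities are under the Palm distribution at $x_0$. Time is slotted. Path loss $\kappa r^{-\alpha}$ with $\alpha>d$, $\delta=d/\alpha\in(0,1)$. Power fading coefficients are i.i.d. exponential with mean $1$ over transmitters and slots, independent of everything. Unit power, always backlogged transmitters. Bandwidth $W$, noise power spectral density $N_r$, $N_0=N_r/\kappa$, SINR threshold $\theta>0$. $c_d$ is the volume of the unit ball in $\mathbb{R}^d$, $C(\delta)=\Gamma(1+\delta)\Gamma(1-\delta)=\frac{\pi\delta}{\sin(\pi\delta)}$. FHMA with $N$ sub-bands: each transmitter $x$ independently picks a sub-band $\mathcal{S}_k(x)$ uniformly from $\{1,\dots,N\}$ in each slot $k$; $\mathrm{SINR}_k=\frac{h_{k,x_0}r_0^{-\alpha}}{WN_0/N+\sum_{x\in\Phi\setminus\{x_0\}}h_{k,x}|x|^{-\alpha}\mathbf{1}(\mathcal{S}_k(x)=\mathcal{S}_k(x_0))}$; a slot is successful if $\mathrm{SINR}_k>\theta$; the local delay is the number of slots until the $N$-th successful slot and $D(N)$ (depending on $\theta$) is its mean, which equals $N\exp\left(\frac{\lambda c_d r_0^d\theta^{\delta}C(\delta)}{(N-1)^{1-\delta}N^{\delta}}+\frac{\theta r_0^\alpha WN_0}{N}\right)$. The normalization by $\log_2(1+\theta)$ accounts for slot duration proportional to $1/\log_2(1+\theta)$. *)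

From Stdlib Require Import Reals Lra ClassicalEpsilon.
Open Scope R_scope.

(* Volume c_d of the unit ball in R^d, via c_0 = 1, c_1 = 2,
   c_d = (2*PI/d) * c_{d-2}  (equivalent to pi^(d/2)/Gamma(d/2+1)). *)
Fixpoint unit_ball_volume (d : nat) : R :=
  match d with
  | O => 1
  | S O => 2
  | S (S k as d1) => 2 * PI / INR (S d1) * unit_ball_volume k
  end.

(* C(delta) = Gamma(1+delta) Gamma(1-delta) = pi delta / sin(pi delta), 0<delta<1 *)
Definition Cdelta (delta : R) : R := PI * delta / sin (PI * delta).

(* Principal branch W_0 of the Lambert W function: the w >= -1 with w e^w = z
   (well defined for z >= -1/e). *)
Definition LambertW (z : R) : R :=
  epsilon (inhabits 0) (fun w => -1 <= w /\ w * exp w = z).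

Definition log2 (x : R) : R := ln x / ln 2.

Definition D_noise (N : nat) (r0 alpha W N0 theta : R) : R :=
  INR N * exp (theta * Rpower r0 alpha * W * N0 / INR N).

Definition D_interf (N : nat) (lam : R) (d : nat) (r0 alpha theta : R) : R :=
  let delta := INR d / alpha in
  INR N * exp (lam * unit_ball_volume d * r0 ^ d * Rpower theta delta * Cdelta delta
               / (Rpower (INR N - 1) (1 - delta) * Rpower (INR N) delta)).

Definition normalized (D : R -> R) (theta : R) : R := D theta / log2 (1 + theta).

Definition is_minimizer (f : R -> R) (t : R) : Prop :=
  0 < t /\ forall theta, 0 < theta -> theta <> t -> f t < f theta.

From Stdlib Require Import Reals Lra Lia ClassicalEpsilon FunctionalExtensionality.
From Coquelicot Require Import Coquelicot.
Open Scope R_scope.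

(* The normalized delay g(θ) = M exp(e θ) ln 2 / ln(1+θ) has a derivative with the sign of
   Φ(θ) - 1, where Φ(θ) = e'(θ) ln(1+θ) (1+θ).  In both regimes Φ is strictly increasing
   and crosses 1, so g decreases and then increases, and its minimizer is the crossing point.
   For e(θ) = cθ the crossing is θ = exp w - 1 with c w e^w = 1, i.e. w = W(1/c).
   For e(θ) = Kθ^δ, Φ(θ) = b0 θ^δ (1+θ) ln(1+θ) / θ with b0 = Kδ, and the bounds
   θ/(1+θ) < ln(1+θ) < θ give b0 θ^δ < Φ(θ) < b0 θ^δ (1+θ), which place the crossing
   between b0^(-1/(δ+1)) - 1 and b0^(-1/δ). *)

Lemma ln_lt_pred x : 0 < x -> x <> 1 -> ln x < x - 1.
Proof.
  intros Hx Hx1.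
  assert (Hln : ln x <> 0) by (intros H; apply Hx1; rewrite <- (exp_ln x), H, exp_0; auto).
  pose proof (exp_ineq1 (ln x) Hln) as H. rewrite exp_ln in H; lra.
Qed.

Lemma ln1p_pos x : 0 < x -> 0 < ln (1 + x).
Proof. intros; rewrite <- ln_1; apply ln_increasing; lra. Qed.

Lemma ln1p_lt x : 0 < x -> ln (1 + x) < x.
Proof. intros Hx. pose proof (ln_lt_pred (1 + x)). lra. Qed.

Lemma lt_ln1p_mul x : 0 < x -> x < ln (1 + x) * (1 + x).
Proof.
  intros Hx.
  pose proof (ln_lt_pred (/ (1 + x)) ltac:(apply Rinv_0_lt_compat; lra)) as H.
  rewrite ln_Rinv in H by lra.
  assert (Hinv : / (1 + x) < 1) by (rewrite <- Rinv_1; apply Rinv_lt_contravar; lra).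
  specialize (H ltac:(lra)).
  apply (Rmult_lt_compat_r (1 + x)) in H; [|lra].
  replace ((/ (1 + x) - 1) * (1 + x)) with (- x) in H by (field; lra). lra.
Qed.

Lemma is_minimizer_of_derive_sign (g g' : R -> R) t : 0 < t ->
  (forall x, 0 < x -> is_derive g x (g' x)) ->
  (forall x, 0 < x < t -> g' x < 0) -> (forall x, t < x -> 0 < g' x) ->
  is_minimizer g t.
Proof.
  intros Ht Hd Hneg Hpos. split; [exact Ht|]. intros x Hx Hxt.
  assert (Hlim : forall a b, 0 < a -> forall c, a <= c <= b -> derivable_pt_lim g c (g' c))
    by (intros a b Ha c Hc; apply is_derive_Reals, Hd; lra).
  destruct (Rtotal_order x t) as [Hlt | [Heq | Hgt]]; [| contradiction |].
  - destruct (MVT_cor2 g g' x t Hlt (Hlim x t Hx)) as [c [Hc Hxc]].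
    assert (g' c < 0) by (apply Hneg; lra). nra.
  - destruct (MVT_cor2 g g' t x Hgt (Hlim t x Ht)) as [c [Hc Htc]].
    assert (0 < g' c) by (apply Hpos; lra). nra.
Qed.

Definition stationarity_ratio (e' : R -> R) (x : R) : R := e' x * ln (1 + x) * (1 + x).

Lemma is_derive_normalized_exp M (e e' : R -> R) x : 0 < x -> is_derive e x (e' x) ->
  is_derive (normalized (fun y => M * exp (e y))) x
    (M * exp (e x) * ln 2 / ((1 + x) * ln (1 + x) ^ 2) * (stationarity_ratio e' x - 1)).
Proof.
  intros Hx He. unfold normalized, log2, stationarity_ratio.
  pose proof (ln1p_pos x Hx) as Hl.
  assert (Hl2 : 0 < ln 2) by (rewrite <- ln_1; apply ln_increasing; lra).
  auto_derive.
  - repeat split; try lra. exists (e' x); exact He.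
    apply Rgt_not_eq, Rdiv_lt_0_compat; auto.
  - change (Derive (fun y => e y) x) with (Derive e x).
    rewrite (is_derive_unique e x (e' x) He). field. repeat split; lra.
Qed.

Lemma is_minimizer_normalized_exp M (e e' : R -> R) t : 0 < M -> 0 < t ->
  (forall x, 0 < x -> is_derive e x (e' x)) ->
  (forall x y, 0 < x -> x < y -> stationarity_ratio e' x < stationarity_ratio e' y) ->
  stationarity_ratio e' t = 1 ->
  is_minimizer (normalized (fun y => M * exp (e y))) t.
Proof.
  intros HM Ht Hd Hincr Hone.
  assert (Hfactor : forall x, 0 < x -> 0 < M * exp (e x) * ln 2 / ((1 + x) * ln (1 + x) ^ 2)).
  { intros x Hx. pose proof (ln1p_pos x Hx). pose proof (exp_pos (e x)).
    assert (0 < ln 2) by (rewrite <- ln_1; apply ln_increasing; lra).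
    apply Rdiv_lt_0_compat; [|apply Rmult_lt_0_compat; [lra | apply pow_lt; lra]].
    repeat apply Rmult_lt_0_compat; lra. }
  apply (is_minimizer_of_derive_sign _
    (fun x => M * exp (e x) * ln 2 / ((1 + x) * ln (1 + x) ^ 2) * (stationarity_ratio e' x - 1)) t Ht).
  - intros x Hx. apply is_derive_normalized_exp; auto.
  - intros x Hx. specialize (Hfactor x ltac:(lra)). specialize (Hincr x t ltac:(lra) ltac:(lra)). nra.
  - intros x Hx. specialize (Hfactor x ltac:(lra)). specialize (Hincr t x Ht Hx). nra.
Qed.

Lemma LambertW_spec z : 0 < z -> 0 < LambertW z /\ LambertW z * exp (LambertW z) = z.
Proof.
  intros Hz. unfold LambertW.
  destruct (epsilon_spec (inhabits 0) (fun w => -1 <= w /\ w * exp w = z)) as [_ Hw].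
  - assert (Hez : 1 < exp z) by (rewrite <- exp_0; apply exp_increasing; lra).
    destruct (IVT (fun w => w * exp w - z) 0 z) as [w [Hwz Hw]];
      [reg | lra | rewrite exp_0; lra | nra |].
    exists w. split; [lra | simpl in Hw; lra].
  - split; [| exact Hw].
    pose proof (exp_pos (epsilon (inhabits 0) (fun w => -1 <= w /\ w * exp w = z))). nra.
Qed.

Lemma is_minimizer_normalized_exp_linear M c : 0 < M -> 0 < c ->
  is_minimizer (normalized (fun theta => M * exp (c * theta))) (exp (LambertW (/ c)) - 1).
Proof.
  intros HM Hc.
  destruct (LambertW_spec (/ c) ltac:(apply Rinv_0_lt_compat; lra)) as [Hw Hwe].
  set (w := LambertW (/ c)) in *.
  assert (Hew : 1 < exp w) by (rewrite <- exp_0; apply exp_increasing; lra).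
  apply (is_minimizer_normalized_exp M (fun theta => c * theta) (fun _ => c)); [lra | lra | ..].
  - intros x _. auto_derive; auto. ring.
  - intros x y Hx Hxy. unfold stationarity_ratio.
    pose proof (ln1p_pos x Hx).
    assert (ln (1 + x) < ln (1 + y)) by (apply ln_increasing; lra).
    assert (ln (1 + x) * (1 + x) < ln (1 + y) * (1 + y)) by nra.
    rewrite !Rmult_assoc. apply Rmult_lt_compat_l; auto.
  - unfold stationarity_ratio.
    replace (1 + (exp w - 1)) with (exp w) by ring. rewrite ln_exp.
    rewrite Rmult_assoc, Hwe. field. lra.
Qed.

Lemma ln1p_ratio_increasing x y : 0 < x -> x < y ->
  ln (1 + x) * (1 + x) / x < ln (1 + y) * (1 + y) / y.
Proof.
  intros Hx Hxy.
  apply (incr_function (fun z => ln (1 + z) * (1 + z) / z) (Finite 0) p_infty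
           (fun z => (z - ln (1 + z)) / z ^ 2)); simpl; auto; try lra.
  - intros z Hz _. auto_derive; [repeat split; lra |]. field. split; lra.
  - intros z Hz _. pose proof (ln1p_lt z Hz). apply Rdiv_lt_0_compat; nra.
Qed.

Lemma Rpower_pred_mul x a : 0 < x -> Rpower x (a - 1) * x = Rpower x a.
Proof. intros Hx. rewrite <- (Rpower_1 x Hx) at 2. rewrite <- Rpower_plus. f_equal; ring. Qed.

Lemma Rpower_opp_inv_exponent b a : 0 < b -> a <> 0 -> b * Rpower (Rpower b (- (1 / a))) a = 1.
Proof.
  intros Hb Ha. rewrite Rpower_mult.
  replace (- (1 / a) * a) with (Ropp 1) by (field; exact Ha).
  rewrite Rpower_Ropp, Rpower_1 by exact Hb. field. lra.
Qed.

Section PowerExponent.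

Variables (b0 delta : R).
Hypotheses (Hb0 : 0 < b0) (Hdelta : 0 < delta < 1).

Let Phi := stationarity_ratio (fun x => b0 * Rpower x (delta - 1)).

Lemma power_ratio_eq x : 0 < x -> Phi x = b0 * Rpower x delta * (ln (1 + x) * (1 + x) / x).
Proof. intros Hx. unfold Phi, stationarity_ratio. rewrite <- (Rpower_pred_mul x delta Hx). field. lra. Qed.

Lemma power_ratio_increasing x y : 0 < x -> x < y -> Phi x < Phi y.
Proof.
  intros Hx Hxy. rewrite !power_ratio_eq by lra.
  pose proof (ln1p_ratio_increasing x y Hx Hxy).
  assert (0 < ln (1 + x) * (1 + x) / x) by (apply Rdiv_lt_0_compat; [pose proof (ln1p_pos x Hx); nra | lra]).
  assert (b0 * Rpower x delta < b0 * Rpower y delta)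
    by (apply Rmult_lt_compat_l; [lra | apply Rlt_Rpower_l; lra]).
  assert (0 < b0 * Rpower x delta) by (apply Rmult_lt_0_compat; [lra | apply exp_pos]).
  nra.
Qed.

Lemma power_ratio_gt x : 0 < x -> b0 * Rpower x delta < Phi x.
Proof.
  intros Hx. rewrite power_ratio_eq by lra.
  assert (1 < ln (1 + x) * (1 + x) / x).
  { apply (Rmult_lt_reg_r x); [lra |]. field_simplify; [| lra]. pose proof (lt_ln1p_mul x Hx). lra. }
  assert (0 < b0 * Rpower x delta) by (apply Rmult_lt_0_compat; [lra | apply exp_pos]).
  nra.
Qed.

Lemma power_ratio_lt x : 0 < x -> Phi x < b0 * Rpower x delta * (1 + x).
Proof.
  intros Hx. unfold Phi, stationarity_ratio.
  rewrite <- (Rpower_pred_mul x delta Hx).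
  pose proof (ln1p_lt x Hx).
  assert (0 < b0 * Rpower x (delta - 1) * (1 + x)) by (repeat apply Rmult_lt_0_compat; try lra; apply exp_pos).
  nra.
Qed.

Lemma power_ratio_lt_inv x y : 0 < x -> 0 < y -> Phi x < Phi y -> x < y.
Proof.
  intros Hx Hy H. destruct (Rtotal_order x y) as [| [-> | Hyx]]; [assumption | lra |].
  pose proof (power_ratio_increasing y x Hy Hyx). lra.
Qed.

Lemma power_ratio_crossing : exists t, 0 < t /\ Phi t = 1.
Proof.
  set (U := Rpower b0 (- (1 / delta))).
  set (x1 := Rmin 1 (Rpower (2 * b0) (- (1 / delta)))).
  assert (HU : 0 < U) by apply exp_pos.
  assert (Hx1 : 0 < x1) by (apply Rmin_glb_lt; [lra | apply exp_pos]).
  assert (HPhiU : 1 < Phi U).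
  { pose proof (power_ratio_gt U HU). unfold U in *.
    rewrite Rpower_opp_inv_exponent in H by lra. exact H. }
  assert (HPhix1 : Phi x1 < 1).
  { assert (Hpow : b0 * Rpower x1 delta <= / 2).
    { pose proof (Rpower_opp_inv_exponent (2 * b0) delta ltac:(lra) ltac:(lra)).
      assert (Rpower x1 delta <= Rpower (Rpower (2 * b0) (- (1 / delta))) delta)
        by (apply Rle_Rpower_l; [lra | split; [lra | apply Rmin_r]]).
      nra. }
    assert (x1 <= 1) by apply Rmin_l.
    pose proof (power_ratio_lt x1 Hx1). pose proof (exp_pos (delta * ln x1)). nra. }
  assert (Hcont : forall a, x1 <= a <= U -> continuity_pt (fun x => Phi x - 1) a).
  { intros a Ha. apply continuity_pt_filterlim.
    apply (ex_derive_continuous (fun x => Phi x - 1)).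
    unfold Phi, stationarity_ratio, Rpower. auto_derive. repeat split; lra. }
  destruct (Ranalysis5.IVT_interv (fun x => Phi x - 1) x1 U Hcont) as [t [Ht Ht1]];
    [apply (power_ratio_lt_inv x1 U); lra | lra | lra |].
  exists t. split; lra.
Qed.

Lemma power_ratio_crossing_bounds t : 0 < t -> Phi t = 1 ->
  Rpower b0 (- (1 / (delta + 1))) - 1 < t < Rpower b0 (- (1 / delta)).
Proof.
  intros Ht HPhit. split.
  - set (s := Rpower b0 (- (1 / (delta + 1)))).
    destruct (Rle_or_lt s 1) as [Hs | Hs]; [lra |].
    assert (Hbs : b0 * (Rpower s delta * s) = 1).
    { rewrite <- (Rpower_1 s) at 2 by lra. rewrite <- Rpower_plus.
      apply Rpower_opp_inv_exponent; lra. }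
    assert (Hlt : Rpower (s - 1) delta < Rpower s delta) by (apply Rlt_Rpower_l; lra).
    pose proof (power_ratio_lt (s - 1) ltac:(lra)).
    replace (1 + (s - 1)) with s in * by ring.
    apply (power_ratio_lt_inv (s - 1) t); [lra | lra |].
    assert (b0 * Rpower (s - 1) delta * s < b0 * Rpower s delta * s)
      by (apply Rmult_lt_compat_r; [lra | apply Rmult_lt_compat_l; lra]).
    lra.
  - pose proof (power_ratio_gt (Rpower b0 (- (1 / delta))) ltac:(apply exp_pos)) as H.
    rewrite Rpower_opp_inv_exponent in H by lra.
    apply power_ratio_lt_inv; [lra | apply exp_pos | lra].
Qed.

End PowerExponent.

Lemma is_minimizer_normalized_exp_power M K delta : 0 < M -> 0 < K -> 0 < delta < 1 ->
  exists t, is_minimizer (normalized (fun theta => M * exp (K * Rpower theta delta))) t /\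
    Rpower (K * delta) (- (1 / (delta + 1))) - 1 < t < Rpower (K * delta) (- (1 / delta)).
Proof.
  intros HM HK Hdelta.
  assert (Hb0 : 0 < K * delta) by nra.
  destruct (power_ratio_crossing (K * delta) delta Hb0 Hdelta) as [t [Ht HPhit]].
  exists t. split; [| exact (power_ratio_crossing_bounds _ _ Hb0 Hdelta t Ht HPhit)].
  apply (is_minimizer_normalized_exp M _ (fun x => K * delta * Rpower x (delta - 1)));
    [exact HM | exact Ht | | exact (power_ratio_increasing _ _ Hb0 Hdelta) | exact HPhit].
  intros x Hx. rewrite Rmult_assoc.
  apply is_derive_scal, is_derive_Reals, derivable_pt_lim_power, Hx.
Qed.

Lemma unit_ball_volume_pos d : 0 < unit_ball_volume d.
Proof.
  enough (H : 0 < unit_ball_volume d /\ 0 < unit_ball_volume (S d)) by apply H.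
  induction d as [| d [IH1 IH2]]; simpl; [lra |]. split; [exact IH2 |].
  change (0 < 2 * PI / INR (S (S d)) * unit_ball_volume d).
  pose proof PI_RGT_0. pose proof (lt_0_INR (S (S d)) ltac:(lia)).
  apply Rmult_lt_0_compat; [apply Rdiv_lt_0_compat |]; lra.
Qed.

Lemma Cdelta_pos delta : 0 < delta < 1 -> 0 < Cdelta delta.
Proof.
  intros Hdelta. unfold Cdelta. pose proof PI_RGT_0.
  assert (0 < sin (PI * delta)) by (apply sin_gt_0; nra).
  apply Rdiv_lt_0_compat; nra.
Qed.

Theorem theorem7 (N : nat) (lam r0 alpha W N0 : R) (d : nat) :
  (2 <= N)%nat -> 0 < lam -> (0 < d)%nat -> 0 < r0 -> INR d < alpha ->
  0 < W -> 0 < N0 ->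
  (* (i) noise-limited regime *)
  is_minimizer (normalized (D_noise N r0 alpha W N0))
    (exp (LambertW (INR N / (Rpower r0 alpha * W * N0))) - 1)
  /\
  (* (ii) interference-limited regime *)
  (let delta := INR d / alpha in
   let b0 := lam * unit_ball_volume d * r0 ^ d * delta * Cdelta delta
             * Rpower (INR N - 1) (delta - 1) * Rpower (INR N) (- delta) in
   exists theta_opt,
     is_minimizer (normalized (D_interf N lam d r0 alpha)) theta_opt /\
     Rpower b0 (- (1 / (delta + 1))) - 1 < theta_opt < Rpower b0 (- (1 / delta))).
Proof.
  intros HN Hlam Hd Hr0 Halpha HW HN0.
  assert (HNR : 2 <= INR N) by (apply (le_INR 2); exact HN).
  assert (HdR : 0 < INR d) by (apply lt_0_INR; exact Hd).
  split.
  - assert (Hpow : 0 < Rpower r0 alpha) by apply exp_pos.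
    set (c := Rpower r0 alpha * W * N0 / INR N).
    replace (INR N / (Rpower r0 alpha * W * N0)) with (/ c) by (unfold c; field; repeat split; lra).
    replace (D_noise N r0 alpha W N0) with (fun theta => INR N * exp (c * theta))
      by (apply functional_extensionality; intros theta; unfold D_noise, c;
          f_equal; f_equal; field; lra).
    apply is_minimizer_normalized_exp_linear; [lra | apply Rdiv_lt_0_compat; [| lra]].
    repeat apply Rmult_lt_0_compat; lra.
  - intros delta b0.
    assert (Hdelta : 0 < delta < 1).
    { unfold delta. split; [apply Rdiv_lt_0_compat; lra |].
      apply (Rmult_lt_reg_r alpha); [lra |]. field_simplify; lra. }
    set (P := Rpower (INR N - 1) (1 - delta) * Rpower (INR N) delta).
    assert (HP : 0 < P) by (apply Rmult_lt_0_compat; apply exp_pos).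
    set (K := lam * unit_ball_volume d * r0 ^ d * Cdelta delta / P).
    assert (HK : 0 < K).
    { pose proof (unit_ball_volume_pos d). pose proof (Cdelta_pos delta Hdelta).
      assert (0 < r0 ^ d) by (apply pow_lt; lra).
      apply Rdiv_lt_0_compat; [| exact HP].
      apply Rmult_lt_0_compat; [apply Rmult_lt_0_compat; [apply Rmult_lt_0_compat |] |]; assumption. }
    replace b0 with (K * delta)
      by (unfold b0, K, P; replace (delta - 1) with (- (1 - delta)) by ring;
          rewrite !Rpower_Ropp; field; split; apply Rgt_not_eq, exp_pos).
    replace (D_interf N lam d r0 alpha) with (fun theta => INR N * exp (K * Rpower theta delta))
      by (apply functional_extensionality; intros theta; unfold D_interf, K, P; fold delta;
          f_equal; f_equal; field; split; apply Rgt_not_eq, exp_pos).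
    apply is_minimizer_normalized_exp_power; lra.
Qed.
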